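(* Let $d\geq 2$ be even and $E,F\subset\mathbb F_q^d$ with $|E||F|\geq 16q^d$. Then $$(|E||F|-\nu(0))^2\geq \frac{|E|^2|F|^2}{36}$$ and $$q^{3d}\Big|\sum_{m\in S_0}\overline{\widehat E(m)}\widehat F(m)\Big|^2-\nu^2(0)\leq q^{-1}|E|^2|F|^2.$$
   Context: $\mathbb F_q$ is a finite field of characteristic greater than two, and $\chi$ is a fixed nontrivial additive character of $\mathbb F_q$. For $f:\mathbb F_q^d\to\mathbb C$, $\widehat f(m)=q^{-d}\sum_{x\in\mathbb F_q^d}\chi(-m\cdot x)f(x)$; sets are identified with their indicator functions. For $m\in\mathbb F_q^d$, $\|m\|=m_1^2+\dots+m_d^2$; $S_0=\{x\in\mathbb F_q^d:\|x\|=0\}$. $\nu(0)=|\{(x,y)\in E\times F:\|x-y\|=0\}|$. *)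

From HB Require Import structures.
From mathcomp Require Import all_boot all_order all_algebra all_field.
Set Implicit Arguments. Unset Strict Implicit. Unset Printing Implicit Defensive.
Import Order.TTheory GRing.Theory Num.Theory.
Local Open Scope ring_scope.

Definition dotv (K : finFieldType) (d : nat) (m x : 'rV[K]_d) : K :=
  \sum_(i < d) m 0 i * x 0 i.

Definition normv (K : finFieldType) (d : nat) (m : 'rV[K]_d) : K :=
  \sum_(i < d) m 0 i ^+ 2.

Definition S0 (K : finFieldType) (d : nat) : {set 'rV[K]_d} :=
  [set x | normv x == 0].

Definition indic (T : finType) (A : {set T}) (x : T) : algC := (x \in A)%:R.

Definition fourier (K : finFieldType) (d : nat) (chi : K -> algC)
  (f : 'rV[K]_d -> algC) (m : 'rV[K]_d) : algC :=
  ((#|K|%:R : algC) ^+ d)^-1 * \sum_(x : 'rV[K]_d) chi (- dotv m x) * f x.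

Definition nu0 (K : finFieldType) (d : nat) (E F : {set 'rV[K]_d}) : nat :=
  #|[set p : 'rV[K]_d * 'rV[K]_d |
      [&& p.1 \in E, p.2 \in F & normv (p.1 - p.2) == 0]]|.

From HB Require Import structures.
From mathcomp Require Import all_boot all_order all_algebra all_field.
From mathcomp Require Import ring zify.
Import Order.TTheory GRing.Theory Num.Theory.
Local Open Scope ring_scope.
Set Implicit Arguments. Unset Strict Implicit. Unset Printing Implicit Defensive.

(* Write A^ for the Fourier transform of the indicator of A
   and S = sum_(m in S_0) conj(E^(m)) F^(m).
   1. Orthogonality of chi turns S into a sum over pairs (x, y) in E x F of the
      Fourier transform of the sphere S_0 at x - y.  That transform is computed
      with Gauss sums G(s) = sum_u chi(s u^2): completing squares coordinatewise
      gives G(s)^d, and for even d this equals (G(1)^2)^(d/2) = eps q^(d/2)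
      with eps = +-1, because G(s)^2 is independent of s != 0 (every element of
      K is a sum of two squares) and G(1)^2 G(-1)^2 = q^2.  The result is the
      exact identity  S = q^(-2d-1) c (c |E :&: F| + eps (q nu(0) - |E||F|))
      with c = q^(d/2) (lemma sphere_correlation).
   2. Cauchy-Schwarz and Plancherel give |S|^2 <= q^(-2d) |E||F|
      (lemma correlation_bound).
   3. Everything is then integer arithmetic on Z = c |E :&: F| + eps (q nu - X),
      X = |E||F|: with X >= 16 c^2 the bound of step 2 forces nu <= 2X/3, which
      is the first estimate, while the second only needs c |E :&: F| <= X/4
      (section Estimates, transferred to algC in section Transfer). *)

Lemma sum_indicator (R : pzSemiRingType) (T : finType) (P : pred T) :
  \sum_(x : T) (P x)%:R = #|[set x | P x]|%:R :> R.
Proof.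
by rewrite -natr_sum -sum1dep_card [in RHS]big_mkcond.
Qed.

Lemma sum_diagonal (R : pzSemiRingType) (T : finType) (A B : {set T}) :
  \sum_(x in A) \sum_(y in B) ((x == y)%:R : R) = #|A :&: B|%:R.
Proof.
transitivity (\sum_(x in A) ((x \in B)%:R : R)).
  apply: eq_bigr => x _; case: (boolP (x \in B)) => xB.
    rewrite (bigD1 x) //= eqxx big1 ?addr0 // => y /andP [_ yx].
    by rewrite eq_sym (negbTE yx).
  by apply: big1 => y yB; case: eqP => // xy; rewrite xy yB in xB.
rewrite big_mkcond /= -[RHS]sum_indicator; apply: eq_bigr => x _.
by case: (x \in A).
Qed.

Lemma sum_pair_indicator (R : pzSemiRingType) (T : finType) (A B : {set T})
    (r : rel T) :
  \sum_(x in A) \sum_(y in B) ((r x y)%:R : R) =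
  #|[set p : T * T | [&& p.1 \in A, p.2 \in B & r p.1 p.2]]|%:R.
Proof.
rewrite pair_big_dep -sum_indicator big_mkcond /=; apply: eq_bigr => p _.
by case: (p.1 \in A); case: (p.2 \in B).
Qed.

Lemma sum_one (R : pzSemiRingType) (T : finType) (A B : {set T}) :
  \sum_(x in A) \sum_(y in B) (1 : R) = (#|A| * #|B|)%:R.
Proof.
under eq_bigr do rewrite sumr_const.
by rewrite sumr_const -mulrnA mulnC.
Qed.

Lemma sum_row_prod (R : comPzSemiRingType) (T : finType) (d : nat)
    (f : 'I_d -> T -> R) :
  \sum_(m : 'rV[T]_d) \prod_i f i (m 0 i) = \prod_i \sum_(u : T) f i u.
Proof.
rewrite bigA_distr_bigA /= (reindex (fun g : {ffun 'I_d -> T} => \row_i g i)) /=.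
  by apply: eq_bigr => g _; apply: eq_bigr => i _; rewrite mxE.
exists (fun m : 'rV[T]_d => [ffun i => m 0 i]) => [g _|m _].
  by apply/ffunP => i; rewrite ffunE mxE.
by apply/rowP => i; rewrite mxE ffunE.
Qed.

Lemma sum_mul2 (R : comPzSemiRingType) (I : finType) (u v : I -> R) :
  \sum_i \sum_j u i * v j = (\sum_i u i) * (\sum_j v j).
Proof. by rewrite mulr_suml; apply: eq_bigr => i _; rewrite mulr_sumr. Qed.

Section CauchySchwarz.
Variable R : numDomainType.

(* Cauchy-Schwarz for nonnegative families, via Lagrange's identity
   2 ((sum a^2)(sum b^2) - (sum ab)^2) = sum_ij (a_i b_j - a_j b_i)^2. *)
Lemma cauchy_schwarz_nneg (I : finType) (a b : I -> R) :
  (forall i, 0 <= a i) -> (forall i, 0 <= b i) ->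
  (\sum_i a i * b i) ^+ 2 <= (\sum_i a i ^+ 2) * (\sum_i b i ^+ 2).
Proof.
move=> a_ge0 b_ge0.
have lagrange : \sum_i \sum_j (a i * b j - a j * b i) ^+ 2 =
    2%:R * ((\sum_i a i ^+ 2) * (\sum_i b i ^+ 2) - (\sum_i a i * b i) ^+ 2).
  transitivity (\sum_i \sum_j (a i ^+ 2 * b j ^+ 2 + b i ^+ 2 * a j ^+ 2
        - 2%:R * ((a i * b i) * (a j * b j)))).
    by apply: eq_bigr => i _; apply: eq_bigr => j _; ring.
  under eq_bigr do rewrite sumrB big_split /=.
  rewrite sumrB big_split /= !sum_mul2.
  under [X in _ + _ - X]eq_bigr do rewrite -mulr_sumr.
  rewrite -mulr_sumr sum_mul2; ring.
have : 0 <= \sum_i \sum_j (a i * b j - a j * b i) ^+ 2.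
  apply: sumr_ge0 => i _; apply: sumr_ge0 => j _; rewrite -realEsqr.
  by apply: rpredB; apply: rpredM; apply: ger0_real.
by rewrite lagrange pmulr_rge0 ?ltr0n // subr_ge0.
Qed.

End CauchySchwarz.

Section Characters.
Variables (K : finFieldType) (chi : K -> algC).
Hypothesis chiD : forall x y : K, chi (x + y) = chi x * chi y.
Hypothesis chi0 : chi 0 = 1.
Hypothesis chi_nontriv : exists x : K, chi x != 1.

Local Notation q := (#|K|%:R : algC).

Lemma q_gt0 : 0 < q.
Proof. by rewrite ltr0n; apply/card_gt0P; exists 0. Qed.

Lemma q_neq0 : q != 0.
Proof. by rewrite gt_eqF // q_gt0. Qed.

Lemma chi_sum (I : Type) (r : seq I) (P : pred I) (F : I -> K) :
  chi (\sum_(i <- r | P i) F i) = \prod_(i <- r | P i) chi (F i).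
Proof. exact: (big_morph chi chiD chi0). Qed.

Lemma chiN t : chi t * chi (- t) = 1.
Proof. by rewrite -chiD subrr chi0. Qed.

(* chi takes values among the p-th roots of unity, p = char K. *)
Lemma norm_chi t : `|chi t| = 1.
Proof.
case: (finPcharP K) => p p_pr p_char.
have chi_p : chi t ^+ p = 1.
  have chiMn n : chi (t *+ n) = chi t ^+ n.
    by elim: n => [|n IH]; rewrite ?mulr0n ?chi0 // mulrS chiD IH exprS.
  by rewrite -chiMn (mulrn_pchar p_char) chi0.
move/(congr1 Num.norm)/eqP: chi_p; rewrite normrX normr1.
by rewrite pexpr_eq1 ?prime_gt0 // => /eqP.
Qed.

Lemma conj_chi t : (chi t)^* = chi (- t).
Proof.
have chi_neq0 : chi t != 0 by rewrite -normr_gt0 norm_chi.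
have -> : (chi t)^* = (chi t)^-1 by rewrite invC_norm norm_chi expr1n invr1 mul1r.
by apply: (mulfI chi_neq0); rewrite chiN divff.
Qed.

Lemma sum_chiM (a : K) : \sum_(t : K) chi (a * t) = q * (a == 0)%:R.
Proof.
have [->|a_neq0] := eqVneq a 0.
  under eq_bigr do rewrite mul0r chi0.
  by rewrite sumr_const mulr1.
have [x0 chix0] := chi_nontriv.
set S := \sum_t chi t.
have S_eq0 : S = 0.
  have S_fix : S = S * chi x0.
    rewrite {1}/S (reindex_inj (addIr x0)) mulr_suml /=.
    by apply: eq_bigr => t _; rewrite chiD.
  move/eqP: S_fix; rewrite -subr_eq0 -{1}(mulr1 S) -mulrBr mulf_eq0 subr_eq0.
  by rewrite (eq_sym 1) (negbTE chix0) orbF => /eqP.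
rewrite mulr0 -[RHS]S_eq0 /S; symmetry; exact: (reindex_inj (mulfI a_neq0)).
Qed.

Lemma sum_chi_nonzero (a : K) :
  \sum_(t : K | t != 0) chi (a * t) = q * (a == 0)%:R - 1.
Proof.
by rewrite -(sum_chiM a) [in RHS](bigD1 0) //= mulr0 chi0 addrAC subrr add0r.
Qed.

Lemma sum_chi_inv (c : K) :
  \sum_(s : K | s != 0) chi (c / s) = q * (c == 0)%:R - 1.
Proof.
rewrite -sum_chi_nonzero (reindex_inj invr_inj) /=.
by apply: eq_big => [s|s _]; rewrite ?invr_eq0 ?invrK.
Qed.

Section GaussSums.
Hypothesis two_neq0 : (2%:R : K) != 0.

(* Completing squares divides by 2 and 4. *)
Lemma four_neq0 : (4%:R : K) != 0.
Proof. by rewrite (_ : 4 = 2 * 2)%N // natrM mulf_neq0. Qed.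

Definition gauss (s : K) : algC := \sum_(u : K) chi (s * u ^+ 2).

Lemma gauss0 : gauss 0 = q.
Proof. by rewrite /gauss; under eq_bigr do rewrite mul0r chi0; rewrite sumr_const. Qed.

(* Completing the square: a linear term only contributes a phase. *)
Lemma gauss_shift (s t : K) : s != 0 ->
  \sum_(u : K) chi (s * u ^+ 2 + u * t) = chi (t ^+ 2 * - (4%:R * s)^-1) * gauss s.
Proof.
move=> s_neq0; pose c := - t / (2%:R * s).
rewrite (reindex_inj (addIr c)) /gauss mulr_sumr; apply: eq_bigr => u _ /=.
have -> : s * (u + c) ^+ 2 + (u + c) * t = t ^+ 2 * - (4%:R * s)^-1 + s * u ^+ 2.
  by rewrite /c; field; rewrite s_neq0 two_neq0 four_neq0.
by rewrite chiD.
Qed.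

Lemma gauss_conj (s : K) : (gauss s)^* = gauss (- s).
Proof. by rewrite rmorph_sum; apply: eq_bigr => u _; rewrite mulNr; apply: conj_chi. Qed.

(* G(s) G(-s) = q for s != 0: expand, shift v by u, and use orthogonality. *)
Lemma gauss_norm (s : K) : s != 0 -> gauss s * gauss (- s) = q.
Proof.
move=> s_neq0.
transitivity (\sum_(v : K) chi (- s * v ^+ 2) * \sum_(u : K) chi (- (2%:R * s * v) * u)).
  rewrite /gauss mulr_suml.
  transitivity (\sum_(u : K) \sum_(v : K) chi (- s * v ^+ 2) * chi (- (2%:R * s * v) * u)).
    apply: eq_bigr => u _; rewrite mulr_sumr (reindex_inj (addIr u)) /=.
    by apply: eq_bigr => v _; rewrite -!chiD; congr chi; ring.
  by rewrite exchange_big; apply: eq_bigr => v _; rewrite mulr_sumr.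
under eq_bigr do rewrite sum_chiM oppr_eq0 !mulf_eq0 (negbTE two_neq0) (negbTE s_neq0).
rewrite (bigD1 0) //= big1 => [|v v_neq0]; last by rewrite (negbTE v_neq0) !mulr0.
by rewrite expr0n mulr0 chi0 eqxx !mul1r mulr1 addr0.
Qed.

Lemma gauss_sq_pairs (s : K) :
  gauss s ^+ 2 = \sum_(p : K * K) chi (s * (p.1 ^+ 2 + p.2 ^+ 2)).
Proof.
rewrite expr2 /gauss mulr_suml -(pair_bigA _ (fun u v => chi (s * (u ^+ 2 + v ^+ 2)))).
by apply: eq_bigr => u _; rewrite mulr_sumr; apply: eq_bigr => v _; rewrite -chiD mulrDr.
Qed.

Lemma gauss_sq_twist (k : K) :
  \sum_(s : K) chi (- k * s) * gauss s ^+ 2 =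
  q * #|[set p : K * K | p.1 ^+ 2 + p.2 ^+ 2 == k]|%:R.
Proof.
under eq_bigr do rewrite gauss_sq_pairs mulr_sumr.
rewrite exchange_big /=.
transitivity (\sum_(p : K * K) \sum_(s : K) chi ((p.1 ^+ 2 + p.2 ^+ 2 - k) * s)).
  by apply: eq_bigr => p _; apply: eq_bigr => s _; rewrite -chiD; congr chi; ring.
under eq_bigr do rewrite sum_chiM subr_eq0.
by rewrite -mulr_sumr sum_indicator.
Qed.

(* Every element of K is a sum of two squares: otherwise the twisted sum above
   vanishes, and its s = 0 term q^2 would be bounded by (q - 1) q. *)
Lemma two_squares (k : K) : exists a b : K, a ^+ 2 + b ^+ 2 = k.
Proof.
have [[a b] /= /eqP rep | no_rep] := pickP (fun p : K * K => p.1 ^+ 2 + p.2 ^+ 2 == k).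
  by exists a, b.
exfalso; have := gauss_sq_twist k.
rewrite (bigD1 0) //= mulr0 chi0 mul1r gauss0.
have -> : #|[set p : K * K | p.1 ^+ 2 + p.2 ^+ 2 == k]| = 0%N.
  by apply: eq_card0 => p; rewrite inE no_rep.
rewrite mulr0 => /eqP; rewrite addr_eq0 => /eqP q2E.
have twist_norm s : s != 0 -> `|chi (- k * s) * gauss s ^+ 2| = q.
  by move=> s_neq0; rewrite normrM norm_chi mul1r normrX normCK gauss_conj gauss_norm.
have : `|q ^+ 2| <= \sum_(s : K | s != 0) q.
  rewrite q2E normrN; apply: le_trans (ler_norm_sum _ _ _) _.
  by apply: ler_sum => s s_neq0; rewrite twist_norm.
have sum_q : \sum_(s : K | s != 0) q = q ^+ 2 - q.
  have : \sum_(s : K) q = q * q by rewrite sumr_const mulr_natr.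
  by rewrite (bigD1 0) //= expr2 => <-; rewrite addrC addrK.
rewrite sum_q ger0_norm ?exprn_ge0 ?ler0n // lerBrDr gerDl => q_le0.
by have := lt_le_trans q_gt0 q_le0; rewrite ltxx.
Qed.

(* G(s k)^2 = G(s)^2 when k = a^2 + b^2 != 0: the map
   (x, y) |-> (a x - b y, b x + a y) is a bijection of K^2 multiplying
   x^2 + y^2 by k. *)
Lemma gauss_sq_scale (s a b : K) : a ^+ 2 + b ^+ 2 != 0 ->
  gauss (s * (a ^+ 2 + b ^+ 2)) ^+ 2 = gauss s ^+ 2.
Proof.
set k := a ^+ 2 + b ^+ 2 => k_neq0.
pose rot (p : K * K) := (a * p.1 - b * p.2, b * p.1 + a * p.2).
pose unrot (p : K * K) := ((a * p.1 + b * p.2) / k, (a * p.2 - b * p.1) / k).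
have rotK : cancel rot unrot.
  by move=> [x y]; rewrite /rot /unrot /=; congr pair; rewrite /k; field.
rewrite !gauss_sq_pairs [RHS](reindex_inj (can_inj rotK)).
by apply: eq_bigr => [[x y]] _ /=; congr chi; rewrite /k; ring.
Qed.

Lemma gauss_sq_const (s : K) : s != 0 -> gauss s ^+ 2 = gauss 1 ^+ 2.
Proof.
move=> s_neq0; have [a [b abE]] := two_squares s.
by rewrite -(@gauss_sq_scale 1 a b) ?abE ?mul1r.
Qed.

(* Hence G(1)^4 = (G(1) G(-1))^2 = q^2, i.e. G(1)^2 = q or G(1)^2 = -q. *)
Lemma gauss_sq_sign : gauss 1 ^+ 2 = q \/ gauss 1 ^+ 2 = - q.
Proof.
have G4 : gauss 1 ^+ 2 * gauss 1 ^+ 2 = q * q.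
  rewrite -{2}(@gauss_sq_const (-1)) ?oppr_eq0 ?oner_eq0 //.
  by rewrite -exprMn gauss_norm ?oner_eq0 // expr2.
move/eqP: G4; rewrite -subr_eq0.
have -> : gauss 1 ^+ 2 * gauss 1 ^+ 2 - q * q =
  (gauss 1 ^+ 2 - q) * (gauss 1 ^+ 2 + q) by ring.
by rewrite mulf_eq0 subr_eq0 addr_eq0 => /orP [/eqP|/eqP]; [left|right].
Qed.

Lemma gauss_pow_even (d : nat) (s : K) : ~~ odd d -> s != 0 ->
  gauss s ^+ d = (gauss 1 ^+ 2) ^+ d./2.
Proof.
move=> d_even s_neq0.
by rewrite -{1}(odd_double_half d) (negbTE d_even) add0n -mul2n exprM gauss_sq_const.
Qed.

Lemma gauss_sq_pow_sign (k : nat) :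
  exists2 eps : int, (eps = 1 \/ eps = -1) & (gauss 1 ^+ 2) ^+ k = eps%:~R * q ^+ k.
Proof.
case: gauss_sq_sign => ->; first by exists 1; [left | rewrite mul1r].
exists ((-1) ^+ k); first by rewrite -signr_odd; case: (odd k); [right | left].
by rewrite -[- q]mulN1r exprMn intr_sign.
Qed.

End GaussSums.

Section Fourier.
Variable d : nat.
Local Notation V := 'rV[K]_d.

Lemma sum_quad (s : K) (z : V) :
  \sum_(m : V) chi (s * normv m + dotv m z) =
  \prod_i \sum_(u : K) chi (s * u ^+ 2 + u * z 0 i).
Proof.
rewrite -sum_row_prod; apply: eq_bigr => m _.
by rewrite /normv /dotv mulr_sumr -big_split /= chi_sum.
Qed.

Lemma sum_dot (z : V) : \sum_(m : V) chi (dotv m z) = q ^+ d * (z == 0)%:R.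
Proof.
rewrite (eq_bigr (fun m => chi (0 * normv m + dotv m z))) => [|m _]; last first.
  by rewrite mul0r add0r.
rewrite sum_quad.
under eq_bigr do under eq_bigr do rewrite mul0r add0r mulrC.
under eq_bigr do rewrite sum_chiM.
have [->|z_neq0] := eqVneq z 0.
  by under eq_bigr do rewrite mxE eqxx mulr1; rewrite prodr_const card_ord mulr1.
rewrite mulr0; have [i zi_neq0] : exists i, z 0 i != 0.
  apply/existsP; move: z_neq0; apply: contraNT => /existsPn z0.
  by apply/eqP/rowP => i; rewrite mxE; apply/eqP/negPn.
by rewrite (bigD1 i) //= (negbTE zi_neq0) mulr0 mul0r.
Qed.

Lemma fourier_indic (A : {set V}) (m : V) :
  fourier chi (indic A) m = (q ^+ d)^-1 * \sum_(y in A) chi (- dotv m y).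
Proof.
rewrite /fourier [in RHS]big_mkcond; congr (_ * _); apply: eq_bigr => y _.
by rewrite /indic; case: (y \in A); rewrite ?mulr1 ?mulr0.
Qed.

Lemma dotvB (m x y : V) : dotv m (x - y) = dotv m x - dotv m y.
Proof. by rewrite /dotv -sumrB; apply: eq_bigr => i _; rewrite !mxE mulrBr. Qed.

Lemma correlation (P : pred V) (A B : {set V}) :
  \sum_(m | P m) (fourier chi (indic A) m)^* * fourier chi (indic B) m =
  (q ^+ d)^-2 * \sum_(x in A) \sum_(y in B) \sum_(m | P m) chi (dotv m (x - y)).
Proof.
transitivity (\sum_(m | P m) (q ^+ d)^-2 *
    \sum_(x in A) \sum_(y in B) chi (dotv m (x - y))).
  apply: eq_bigr => m _; rewrite !fourier_indic rmorphM rmorph_sum /=.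
  rewrite fmorphV rmorphXn /= conjC_nat mulrACA -expr2 exprVn; congr (_ * _).
  rewrite mulr_suml; apply: eq_bigr => x _; rewrite mulr_sumr.
  by apply: eq_bigr => y _; rewrite conj_chi opprK dotvB -chiD.
rewrite -mulr_sumr exchange_big /=; congr (_ * _); apply: eq_bigr => x _.
by rewrite exchange_big.
Qed.

Lemma plancherel (A : {set V}) :
  \sum_(m : V) `|fourier chi (indic A) m| ^+ 2 = (q ^+ d)^-1 * #|A|%:R.
Proof.
under eq_bigr do rewrite normCK mulrC.
rewrite correlation; under eq_bigr do under eq_bigr do rewrite sum_dot subr_eq0.
under eq_bigr do rewrite -mulr_sumr.
by rewrite -mulr_sumr sum_diagonal setIid mulrA expr2 invfM divfK // expf_neq0 // q_neq0.
Qed.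

(* Cauchy-Schwarz and Plancherel bound any partial correlation. *)
Lemma correlation_bound (P : pred V) (A B : {set V}) :
  `|\sum_(m | P m) (fourier chi (indic A) m)^* * fourier chi (indic B) m| ^+ 2
  <= (q ^+ d)^-2 * (#|A| * #|B|)%:R.
Proof.
set S := \sum_(m : V) `|fourier chi (indic A) m| * `|fourier chi (indic B) m|.
have S_ge0 : 0 <= S by apply: sumr_ge0 => m _; rewrite mulr_ge0.
have triangle : `|\sum_(m | P m) (fourier chi (indic A) m)^* * fourier chi (indic B) m|
    <= S.
  apply: le_trans (ler_norm_sum _ _ _) _.
  rewrite /S [X in _ <= X](bigID P) /= -[X in X <= _]addr0 lerD //.
    by apply: ler_sum => m _; rewrite normrM norm_conjC.
  by apply: sumr_ge0 => m _; rewrite mulr_ge0.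
apply: (le_trans (y := S ^+ 2)); first by rewrite ler_pXn2r // nnegrE.
apply: le_trans (cauchy_schwarz_nneg _ _) _ => //.
by rewrite !plancherel mulrACA -expr2 exprVn natrM.
Qed.

Section Sphere.
Hypothesis two_neq0 : (2%:R : K) != 0.
Hypothesis d_even : ~~ odd d.

(* Fourier transform of the isotropic sphere S_0: write [||m|| = 0] as
   q^-1 sum_s chi(s ||m||), evaluate the Gauss sums over m coordinatewise
   and sum the resulting phases over s != 0. *)
Lemma sphere_transform (z : V) :
  \sum_(m in S0 K d) chi (dotv m z) =
  q^-1 * (q ^+ d * (z == 0)%:R + (gauss 1 ^+ 2) ^+ d./2 * (q * (normv z == 0)%:R - 1)).
Proof.
transitivity (q^-1 * \sum_(s : K) \sum_(m : V) chi (s * normv m + dotv m z)).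
  rewrite exchange_big mulr_sumr big_mkcond /=; apply: eq_bigr => m _.
  under eq_bigr do rewrite chiD (mulrC _ (normv m)).
  rewrite -mulr_suml sum_chiM inE -!mulrA mulKf ?q_neq0 //.
  by case: (normv m == 0); rewrite ?mul1r ?mul0r.
congr (_ * _); rewrite (bigD1 0) //=.
under eq_bigr do rewrite mul0r add0r.
rewrite sum_dot; congr (_ + _).
transitivity (\sum_(s : K | s != 0)
    chi ((- (normv z / 4%:R)) / s) * (gauss 1 ^+ 2) ^+ d./2).
  apply: eq_bigr => s s_neq0; rewrite sum_quad.
  under eq_bigr do rewrite gauss_shift //.
  rewrite big_split /= prodr_const card_ord gauss_pow_even // -chi_sum.
  by congr (chi _ * _); rewrite /normv -mulr_suml invfM mulrN mulNr mulrA.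
rewrite -mulr_suml sum_chi_inv oppr_eq0 mulf_eq0 invr_eq0.
by rewrite (negbTE (four_neq0 two_neq0)) orbF mulrC.
Qed.

Lemma sphere_correlation (A B : {set V}) :
  \sum_(m in S0 K d) (fourier chi (indic A) m)^* * fourier chi (indic B) m =
  (q ^+ d)^-2 * (q^-1 * (q ^+ d * #|A :&: B|%:R +
     (gauss 1 ^+ 2) ^+ d./2 * (q * (nu0 A B)%:R - (#|A| * #|B|)%:R))).
Proof.
rewrite correlation; congr (_ * _).
under eq_bigr do under eq_bigr do rewrite sphere_transform subr_eq0.
rewrite -sum_diagonal -sum_one.
have -> : (nu0 A B)%:R = \sum_(x in A) \sum_(y in B) ((normv (x - y) == 0)%:R : algC).
  by rewrite sum_pair_indicator; congr (#|_|%:R); apply/setP => p; rewrite !inE.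
set c := (gauss 1 ^+ 2) ^+ d./2.
transitivity (\sum_(x in A) \sum_(y in B) ((q^-1 * q ^+ d) * (x == y)%:R +
    (q^-1 * c * q) * (normv (x - y) == 0)%:R + (- (q^-1 * c)) * 1)).
  by apply: eq_bigr => x _; apply: eq_bigr => y _; ring.
under eq_bigr do rewrite !big_split /= -!mulr_sumr.
by rewrite !big_split /= -!mulr_sumr; ring.
Qed.

End Sphere.
End Fourier.
End Characters.

(* Integer arithmetic behind the two estimates.  Below, c = q^(d/2),
   I = |E :&: F|, X = |E||F|, nu = nu(0) and Z = c I + eps (q nu - X). *)
Section Estimates.
Variables (q c I nu X eps : int).
Hypotheses (eps_sign : eps = 1 \/ eps = -1) (c_ge0 : 0 <= c) (I_ge0 : 0 <= I).
Hypotheses (cX : 16 * c ^+ 2 <= X) (IX : I ^+ 2 <= X).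

Let Z := c * I + eps * (q * nu - X).

(* AM-GM: (4 c I)^2 = (16 c^2) I^2 <= X^2. *)
Lemma cI_le : 4 * (c * I) <= X.
Proof. nia. Qed.

(* With the Fourier-side bound Z^2 <= q^2 c^2 X, the size assumption forces
   |4 Z| <= q X, hence nu <= 2 X / 3. *)
Lemma nu_le : 3 <= q -> Z ^+ 2 <= q ^+ 2 * c ^+ 2 * X -> 3 * nu <= 2 * X.
Proof.
move=> q_ge3 Z2.
have qX2 : 0 <= q ^+ 2 * X * (X - 16 * c ^+ 2).
  by apply: mulr_ge0; [apply: mulr_ge0; [apply: sqr_ge0|nia]|rewrite subr_ge0].
have Z_abs : (4 * Z) ^+ 2 <= (q * X) ^+ 2 by nia.
have qX_ge0 : 0 <= q * X by apply: mulr_ge0; nia.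
have /andP [Z_ge Z_le] : - (q * X) <= 4 * Z <= q * X.
  by rewrite -ler_norml -(ler_pXn2r (_ : 0 < 2)%N) ?nnegrE ?normr_ge0 // real_normK ?num_real.
have cI_ge0 : 0 <= c * I by nia.
have qnu : 4 * (q * nu) <= (q + 5) * X.
  by move: Z_le Z_ge cI_ge0 cI_le; rewrite /Z; case: eps_sign => ->; nia.
nia.
Qed.

(* Hence X <= 3 (X - nu), the first estimate. *)
Lemma X_sq_le : 0 <= nu -> 3 <= q -> Z ^+ 2 <= q ^+ 2 * c ^+ 2 * X ->
  X ^+ 2 <= 36 * (X - nu) ^+ 2.
Proof. move=> nu_ge0 q_ge3 /(nu_le q_ge3) nuX; nia. Qed.

(* The second estimate only uses 0 <= c I <= X / 4. *)
Lemma Z_sq_le : 0 <= nu -> 2 <= q -> Z ^+ 2 <= q ^+ 2 * nu ^+ 2 + q * X ^+ 2.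
Proof.
move=> nu_ge0 q_ge2.
have cI_ge0 : 0 <= c * I by nia.
have qnu_ge0 : 0 <= q * nu by nia.
rewrite -exprMn /Z; move: cI_le cI_ge0 qnu_ge0.
by case: eps_sign => ->; move: (c * I) (q * nu) => a Y; nia.
Qed.

End Estimates.

(* Transfer of the integer estimates to the correlation S over the sphere:
   with c = q^(d/2) the sphere identity reads S = Z / (c^3 q), and the
   Plancherel bound |S|^2 <= X / q^(2d) becomes Z^2 <= q^2 c^2 X. *)
Section Transfer.
Variables (n d I nu X : nat) (eps : int) (S : algC).
Hypotheses (d_even : ~~ odd d) (eps_sign : eps = 1 \/ eps = -1) (n_ge3 : (3 <= n)%N).
Hypotheses (cX : (16 * n ^ d <= X)%N) (IX : (I ^ 2 <= X)%N).
Hypothesis S_eq : S = (n%:R ^+ d)^-2 * (n%:R^-1 * (n%:R ^+ d * I%:R +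
  eps%:~R * n%:R ^+ d./2 * (n%:R * nu%:R - X%:R))).

Local Notation c := (n%:Z ^+ d./2).
Local Notation Z := (c * I%:Z + eps * (n%:Z * nu%:Z - X%:Z)).

Let n_gt0 : 0 < n%:R :> algC.
Proof. by rewrite ltr0n; lia. Qed.

Let c_gt0 : 0 < n%:R ^+ d./2 :> algC.
Proof. by rewrite exprn_gt0. Qed.

Let nd : n%:R ^+ d = (n%:R ^+ d./2) ^+ 2 :> algC.
Proof.
by rewrite -exprM muln2 -[in LHS](odd_double_half d) (negbTE d_even).
Qed.

Lemma correlation_int : S = Z%:~R / ((n%:R ^+ d./2) ^+ 3 * n%:R).
Proof.
rewrite S_eq nd !(rmorphXn, rmorphM, rmorphD, rmorphB) /= -!pmulrn.
by field; rewrite !gt_eqF.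
Qed.

Let S_real : S \is Num.real.
Proof. by rewrite correlation_int rpredM ?rpredV ?realz ?rpredM ?rpredX ?realn. Qed.

Let cX_int : 16 * c ^+ 2 <= X%:Z.
Proof.
by rewrite -(ler_int algC) !(rmorphXn, rmorphM) /= -!pmulrn -nd -natrX -natrM ler_nat.
Qed.

Let IX_int : I%:Z ^+ 2 <= X%:Z.
Proof. by rewrite -(ler_int algC) !(rmorphXn, rmorphM) /= -!pmulrn -natrX ler_nat. Qed.

Lemma correlation_int_bound : `|S| ^+ 2 <= (n%:R ^+ d)^-2 * X%:R ->
  Z ^+ 2 <= n%:Z ^+ 2 * c ^+ 2 * X%:Z.
Proof.
rewrite -(ler_int algC) !(rmorphXn, rmorphM) /= -!pmulrn.
rewrite real_normK // correlation_int nd expr_div_n ler_pdivrMr ?exprn_gt0 ?mulr_gt0 //.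
have -> // : ((n%:R ^+ d./2) ^+ 2) ^- 2 * X%:R * ((n%:R ^+ d./2) ^+ 3 * n%:R) ^+ 2 =
  n%:R ^+ 2 * (n%:R ^+ d./2) ^+ 2 * X%:R :> algC.
by field; rewrite gt_eqF.
Qed.

Lemma first_estimate : `|S| ^+ 2 <= (n%:R ^+ d)^-2 * X%:R ->
  (X%:R : algC) ^+ 2 / 36%:R <= (X%:R - nu%:R) ^+ 2.
Proof.
move=> /correlation_int_bound Z_bound.
have X2 : X%:Z ^+ 2 <= 36 * (X%:Z - nu%:Z) ^+ 2.
  by apply: (X_sq_le eps_sign _ _ cX_int IX_int _ _ Z_bound); rewrite ?exprn_ge0 ?lez_nat.
rewrite ler_pdivrMr ?ltr0n // mulrC; move: X2.
by rewrite -(ler_int algC) !(rmorphXn, rmorphM, rmorphB) /= -!pmulrn.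
Qed.

Lemma second_estimate :
  n%:R ^+ (3 * d) * `|S| ^+ 2 - nu%:R ^+ 2 <= n%:R^-1 * (X%:R : algC) ^+ 2.
Proof.
have Z2 : Z ^+ 2 <= n%:Z ^+ 2 * nu%:Z ^+ 2 + n%:Z * X%:Z ^+ 2.
  apply: (Z_sq_le eps_sign _ _ cX_int IX_int);
    by rewrite ?exprn_ge0 ?lez_nat //; lia.
have -> : n%:R ^+ (3 * d) * `|S| ^+ 2 - nu%:R ^+ 2 =
    (Z%:~R ^+ 2 - n%:R ^+ 2 * nu%:R ^+ 2) / n%:R ^+ 2 :> algC.
  by rewrite real_normK // correlation_int mulnC exprM nd; field; rewrite !gt_eqF.
have -> : n%:R^-1 * X%:R ^+ 2 = (n%:R * X%:R ^+ 2) / n%:R ^+ 2 :> algC.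
  by field; rewrite gt_eqF.
rewrite ler_pM2r ?invr_gt0 ?exprn_gt0 // lerBlDr [n%:R * _ + _]addrC; move: Z2.
by rewrite -(ler_int algC) !(rmorphXn, rmorphM, rmorphD) /= -!pmulrn.
Qed.

End Transfer.

(* Outside characteristic 2, 2 != 0 and 0, 1, -1 are distinct, so |K| >= 3. *)
Lemma two_neq0_card_ge3 (K : finFieldType) : 2%N \notin [pchar K] ->
  (2%:R : K) != 0 /\ (3 <= #|K|)%N.
Proof.
move=> char2; have two_neq0 : (2%:R : K) != 0.
  by apply/negP => two0; move/negP: char2; apply; rewrite inE /= two0.
split=> //; rewrite cardE (@uniq_leq_size _ [:: 0; 1; -1]) //.
  rewrite /= !inE negb_or eq_sym oner_eq0 eq_sym oppr_eq0 oner_eq0 andbT /=.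
  by apply: contra two_neq0 => /eqP one_m1; rewrite mulr2n {2}one_m1 subrr.
by move=> x; rewrite mem_enum.
Qed.

Theorem mainTheorem10 (K : finFieldType) (chi : K -> algC)
  (hchar : 2%N \notin [pchar K])
  (hchi_add : forall x y : K, chi (x + y) = chi x * chi y)
  (hchi0 : chi 0 = 1)
  (hchi_nontriv : exists x : K, chi x != 1)
  (d : nat) (hd2 : (2 <= d)%N) (hdeven : ~~ odd d)
  (E F : {set 'rV[K]_d})
  (hEF : (16 * #|K| ^ d <= #|E| * #|F|)%N) :
  let q : algC := #|K|%:R in
  let cE : algC := #|E|%:R in
  let cF : algC := #|F|%:R in
  let nu : algC := (nu0 E F)%:R in
  ((cE * cF) ^+ 2 / 36%:R <= (cE * cF - nu) ^+ 2)
  /\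
  (q ^+ (3 * d) *
     `| \sum_(m in S0 K d) (fourier chi (indic E) m)^* * fourier chi (indic F) m | ^+ 2
   - nu ^+ 2
   <= q^-1 * (cE * cF) ^+ 2).
Proof.
move=> q cE cF nu; rewrite {}/q {}/cE {}/cF {}/nu -natrM.
have [two_neq0 q_ge3] := two_neq0_card_ge3 hchar.
have [eps eps_sign gauss_pow] := gauss_sq_pow_sign hchi_add hchi0 hchi_nontriv two_neq0 d./2.
have card_EF : (#|E :&: F| ^ 2 <= #|E| * #|F|)%N.
  by rewrite expnS expn1 leq_mul // subset_leq_card // ?subsetIl ?subsetIr.
have S_eq := sphere_correlation hchi_add hchi0 hchi_nontriv two_neq0 hdeven E F.
rewrite gauss_pow in S_eq.
have S_le := correlation_bound hchi_add hchi0 hchi_nontriv (fun m => m \in S0 K d) E F.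
split; first exact: first_estimate hdeven eps_sign q_ge3 hEF card_EF S_eq S_le.
exact: second_estimate hdeven eps_sign q_ge3 hEF card_EF S_eq.
Qed.
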